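(* Let $\mathbb F$ be a field of characteristic different from $2$ and $3$, let $f,g,v,w\in\mathbb F$, put $A=X^3+fX+g$, $R=-v(X-w)$ and $D=A^2+4R=(X^3+fX+g)^2-4v(X-w)$. Let $Z=\tfrac12(Y+A)$ on the curve $Y^2=D(X)$, so that $Z^2-AZ-R=0$, and let $\overline Z=\tfrac12(-Y+A)$ be its conjugate. Suppose $Z_0=\bigl(Z+d_0(X+e_0)\bigr)/\bigl(u_0(X^2-v_0X+w_0)\bigr)$, where $u_0(X^2-v_0X+w_0)$ divides $d_0^2(X+e_0)^2+d_0(X+e_0)A-R$, has a two-sided continued fraction expansion all of whose partial quotients have degree $1$, with complete quotients $$Z_h=\frac{Z+d_h(X+e_h)}{u_h(X^2-v_hX+w_h)}\qquad(h\in\mathbb Z),$$ in the sense of the Standing Setup below (with $u_h\neq0$ for all $h$). Let $(T_h)_{h\in\mathbb Z}$ be a sequence of nonzero elements of $\mathbb F$ satisfying $T_{h-1}T_{h+1}=d_hT_h^2$ for all $h$. Then for all $h\in\mathbb Z$, $$T_{h-3}T_{h+3}=v^2\,T_{h-2}T_{h+2}-v^3\,(g+wf+w^3)\,T_h^2 .$$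
   Context: Standing Setup. $\mathbb F$ is a field of characteristic not $2$ or $3$; $f,g\in\mathbb F$; $A=X^3+fX+g\in\mathbb F[X]$; $R\in\mathbb F[X]$ is a polynomial of degree at most $2$; $D=A^2+4R$; $Y$ satisfies $Y^2=D(X)$, $Z=\tfrac12(Y+A)$ and $\overline Z=\tfrac12(-Y+A)$, so $Z+\overline Z=A$ and $Z\overline Z=-R$. We are given sequences $(u_h),(v_h),(w_h),(d_h),(e_h)$ of elements of $\mathbb F$ indexed by $h\in\mathbb Z$, with all $u_h\neq0$, such that $Z_h=\bigl(Z+d_h(X+e_h)\bigr)/\bigl(u_h(X^2-v_hX+w_h)\bigr)$ are the consecutive complete quotients of a continued fraction expansion whose $h$-th line is $$\frac{Z+d_h(X+e_h)}{u_h(X^2-v_hX+w_h)}=\frac{X+v_h}{u_h}-\frac{\overline Z+d_{h+1}(X+e_{h+1})}{u_h(X^2-v_hX+w_h)} .$$ Equivalently, for every $h\in\mathbb Z$ the following two identities hold in $\mathbb F[X]$: (i) $A+d_h(X+e_h)+d_{h+1}(X+e_{h+1})=(X+v_h)(X^2-v_hX+w_h)$; (ii) $-u_hu_{h+1}(X^2-v_hX+w_h)(X^2-v_{h+1}X+w_{h+1})=\bigl(Z+d_{h+1}(X+e_{h+1})\bigr)\bigl(\overline Z+d_{h+1}(X+e_{h+1})\bigr)=d_{h+1}^2(X+e_{h+1})^2+d_{h+1}(X+e_{h+1})A-R$. In this statement $R=-v(X-w)$ with $v,w\in\mathbb F$. *)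

From HB Require Import structures.
From mathcomp Require Import all_boot all_order all_algebra.
Set Implicit Arguments. Unset Strict Implicit. Unset Printing Implicit Defensive.
Import GRing.Theory.
Local Open Scope ring_scope.

Definition Apoly (F : fieldType) (f g : F) : {poly F} :=
  'X^3 + f *: 'X + g%:P.

Definition Rpoly (F : fieldType) (v w : F) : {poly F} :=
  - (v *: ('X - w%:P)).

Definition quadp (F : fieldType) (a b : F) : {poly F} :=
  'X^2 - a *: 'X + b%:P.

Definition cf_line_i (F : fieldType) (f g : F)
  (vs ws ds es : int -> F) (h : int) : Prop :=
  Apoly f g + ds h *: ('X + (es h)%:P) + ds (h + 1) *: ('X + (es (h + 1))%:P)
  = ('X + (vs h)%:P) * quadp (vs h) (ws h).

Definition cf_line_ii (F : fieldType) (f g v w : F)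
  (us vs ws ds es : int -> F) (h : int) : Prop :=
  - ((us h * us (h + 1)) *: (quadp (vs h) (ws h) * quadp (vs (h + 1)) (ws (h + 1))))
  = (ds (h + 1)) ^+ 2 *: ('X + (es (h + 1))%:P) ^+ 2
    + ds (h + 1) *: (('X + (es (h + 1))%:P) * Apoly f g) - Rpoly v w.

(* Eliminating A between line (ii) at h - 1 and line (i) at h shows that the
   monic quadratic Q_h = X^2 - v_h X + w_h divides
   R + d_h d_(h+1) (X + e_h)(X + e_(h+1)), a polynomial of degree at most 2.
   The cofactor is therefore constant, which yields -u_(h-1) u_h = d_h and
     R = d_h d_(h+1) (Q_h - (X + e_h)(X + e_(h+1)))   and
     Q_(h-1) + d_(h+1) = (X + e_h)(X + v_h).
   Evaluating at the root w of R and at -e_h gives, with s_h = e_h + w,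
     d_(h-1) d_h d_(h+1) = -v s_h   and   s_(h-1) s_h s_(h+1) = d_h s_h + A(w),
   the latter also using line (ii) at X = w.  The recurrence for T gives
   T_(h-3) T_(h+3) / T_h^2 = d_(h-2) d_(h-1)^2 d_h^3 d_(h+1)^2 d_(h+2), a product
   of three consecutive triples d_(n-1) d_n d_(n+1), so it equals
   -v^3 s_(h-1) s_h s_(h+1), and the identity follows. *)

From HB Require Import structures.
From mathcomp Require Import all_boot all_order all_algebra.
From mathcomp Require Import ring zify.
Set Implicit Arguments. Unset Strict Implicit. Unset Printing Implicit Defensive.
Import GRing.Theory.
Local Open Scope ring_scope.

Lemma monic_mul_size_leq_polyC (R : idomainType) (q p : {poly R}) :
  q \is monic -> (size (q * p)%R <= size q)%N -> p = ((q * p)`_(size q).-1)%:P.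
Proof.
move=> q_monic; have [-> _ | p_neq0] := eqVneq p 0; first by rewrite mulr0 coef0.
rewrite mulrC size_Mmonic // => size_le.
have /size1_polyC p_const : (size p <= 1)%N.
  by move: size_le (monic_neq0 q_monic); rewrite -size_poly_gt0; lia.
by rewrite {2}p_const mulrC coefMC -lead_coefE (monicP q_monic) mul1r.
Qed.

Section Polynomials.

Variable F : fieldType.

Lemma horner_Apoly (f g x : F) : (Apoly f g).[x] = x ^+ 3 + f * x + g.
Proof. by rewrite /Apoly !hornerD horner_exp hornerZ hornerX hornerC. Qed.

Lemma horner_Rpoly (v w x : F) : (Rpoly v w).[x] = v * (w - x).
Proof. by rewrite /Rpoly hornerN hornerZ hornerXsubC -mulrN opprB. Qed.

Lemma quadpE (a b : F) : quadp a b = Poly [:: b; - a; 1].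
Proof. by rewrite /quadp /= !cons_poly_def -!mul_polyC; ring. Qed.

Lemma size_quadp (a b : F) : size (quadp a b) = 3.
Proof. by rewrite quadpE (PolyK (c := 0)) ?oner_neq0. Qed.

Lemma monic_quadp (a b : F) : quadp a b \is monic.
Proof. by rewrite monicE lead_coefE size_quadp quadpE coef_Poly. Qed.

End Polynomials.

Section ContinuedFraction.

Variables (F : fieldType) (f g v w : F) (us vs ws ds es : int -> F).
Hypothesis us_neq0 : forall n, us n != 0.
Hypothesis line_i : forall n, cf_line_i f g vs ws ds es n.
Hypothesis line_ii : forall n, cf_line_ii f g v w us vs ws ds es n.

Local Notation Q n := (quadp (vs n) (ws n)).
Local Notation L n := ('X + (es n)%:P).

Lemma cf_consecutive_lines n :
  [/\ ds n = - (us (n - 1) * us n),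
      Q (n - 1) + (ds (n + 1))%:P = L n * ('X + (vs n)%:P)
    & Rpoly v w = (ds n * ds (n + 1)) *: (Q n - L n * L (n + 1))].
Proof.
have hi := line_i n; have hii := line_ii (n - 1).
rewrite /cf_line_i in hi; rewrite /cf_line_ii subrK in hii.
set c := us (n - 1) * us n in hii *; set d := ds n in hi hii *.
set d' := ds (n + 1) in hi *.
set M := - c%:P * Q (n - 1) - d%:P * (L n * ('X + (vs n)%:P)).
set r := Rpoly v w + (d * d')%:P * (L n * L (n + 1)).
have QM : Q n * M = - r.
  have A_eq : Apoly f g = ('X + (vs n)%:P) * Q n - d *: L n - d' *: L (n + 1).
    by rewrite -hi; ring.
  rewrite A_eq -!mul_polyC in hii.
  have -> : Q n * M
      = - (c%:P * (Q (n - 1) * Q n)) - d%:P * (L n * ('X + (vs n)%:P)) * Q n.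
    by rewrite /M; ring.
  by rewrite hii /r; ring.
have rE : r = Poly [:: v * w + d * d' * es n * es (n + 1);
                      - v + d * d' * (es n + es (n + 1)); d * d'].
  by rewrite /r /Rpoly /= !cons_poly_def -!mul_polyC; ring.
have ME : M = Poly [:: - c * ws (n - 1) - d * es n * vs n;
                      c * vs (n - 1) - d * (es n + vs n); - c - d].
  by rewrite /M /quadp /= !cons_poly_def -!mul_polyC; ring.
have M_const : M = (- (d * d'))%:P.
  have size_QM : (size (Q n * M)%R <= size (Q n))%N.
    by rewrite QM size_polyN rE size_quadp (leq_trans (size_Poly _)).
  rewrite (monic_mul_size_leq_polyC (monic_quadp _ _) size_QM).
  by rewrite QM coefN rE coef_Poly size_quadp.
have d_eq : d = - c.
  have := congr1 (fun p : {poly F} => p`_2) M_const.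
  by rewrite ME coef_Poly coefC /= => /eqP; rewrite subr_eq0 => /eqP <-.
have dP_neq0 : d%:P != 0 by rewrite polyC_eq0 d_eq oppr_eq0 mulf_neq0.
split => //.
- apply: (mulfI dP_neq0); apply/eqP; rewrite -subr_eq0; apply/eqP.
  transitivity (M + (d * d')%:P); last by rewrite M_const polyCN addNr.
  by rewrite /M -[c]opprK -d_eq; ring.
- apply/eqP; rewrite -subr_eq0; apply/eqP.
  transitivity (- (Q n * (M + (d * d')%:P))).
    by rewrite [Q n * _]mulrDr QM /r -!mul_polyC; ring.
  by rewrite M_const polyCN addNr mulr0 oppr0.
Qed.

Lemma ds_neq0 n : ds n != 0.
Proof. by have [-> _ _] := cf_consecutive_lines n; rewrite oppr_eq0 mulf_neq0. Qed.

Local Notation s n := (es n + w).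

Lemma horner_quadp_w n : (Q n).[w] = s n * s (n + 1).
Proof.
have [_ _ /(congr1 (horner^~ w))] := cf_consecutive_lines n.
rewrite horner_Rpoly hornerZ hornerD hornerN hornerM !hornerD hornerX !hornerC.
rewrite subrr mulr0 => /esym /eqP.
rewrite mulf_eq0 (negbTE (mulf_neq0 (ds_neq0 n) (ds_neq0 (n + 1)))) subr_eq0.
by move=> /eqP ->; rewrite [s n]addrC [s (n + 1)]addrC.
Qed.

Lemma ds_prod3 n : ds (n - 1) * ds n * ds (n + 1) = - v * s n.
Proof.
have [_ Q_prev _] := cf_consecutive_lines n.
have [_ _ R_prev] := cf_consecutive_lines (n - 1); rewrite subrK in R_prev.
have /(congr1 (horner^~ (- es n))) := R_prev.
have /(congr1 (horner^~ (- es n))) := Q_prev.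
rewrite hornerD hornerM !hornerD hornerX !hornerC addNr mul0r => /eqP Q_prev_e.
rewrite horner_Rpoly hornerZ hornerD hornerN hornerM !hornerD hornerX !hornerC.
rewrite addNr mulr0 subr0 => R_prev_e.
move: Q_prev_e; rewrite addrC addr_eq0 => /eqP ->.
by rewrite mulrN -R_prev_e; ring.
Qed.

Lemma s_prod3 n : s (n - 1) * s n * s (n + 1) = ds n * s n + (Apoly f g).[w].
Proof.
have s_neq0 : s n != 0.
  apply: contraTneq (mulf_neq0 (mulf_neq0 (ds_neq0 (n - 1)) (ds_neq0 n)) (ds_neq0 (n + 1))).
  by rewrite ds_prod3 => ->; rewrite mulr0 eqxx.
have [d_eq _ _] := cf_consecutive_lines n.
have := line_ii (n - 1); rewrite /cf_line_ii subrK -scaleNr -d_eq.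
move=> /(congr1 (horner^~ w)); rewrite hornerZ hornerM !horner_quadp_w subrK.
rewrite hornerD hornerN horner_Rpoly hornerD !hornerZ !hornerM horner_Apoly.
rewrite hornerD hornerX hornerC subrr mulr0 subr0 => line_ii_w.
apply: (mulfI (mulf_neq0 (ds_neq0 n) s_neq0)).
transitivity (ds n * (s (n - 1) * s n * (s n * s (n + 1)))); first ring.
by rewrite line_ii_w; ring.
Qed.

Lemma ds_prod5 h :
  ds (h - 2) * ds (h - 1) ^+ 2 * ds h ^+ 3 * ds (h + 1) ^+ 2 * ds (h + 2)
  = v ^+ 2 * (ds (h - 1) * ds h ^+ 2 * ds (h + 1)) - v ^+ 3 * (Apoly f g).[w].
Proof.
have := ds_prod3 (h - 1); have := ds_prod3 (h + 1).
have -> : h - 1 - 1 = h - 2 by ring.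
have -> : h + 1 + 1 = h + 2 by ring.
rewrite addrK subrK => prod_next prod_prev.
have prod_h := ds_prod3 h.
transitivity ((ds (h - 2) * ds (h - 1) * ds h) * (ds (h - 1) * ds h * ds (h + 1))
              * (ds h * ds (h + 1) * ds (h + 2))); first ring.
rewrite prod_prev prod_h prod_next.
have -> : ds (h - 1) * ds h ^+ 2 * ds (h + 1) = ds h * (- v * s h).
  by rewrite -prod_h; ring.
transitivity (- v ^+ 3 * (s (h - 1) * s h * s (h + 1))); first ring.
by rewrite s_prod3; ring.
Qed.

End ContinuedFraction.

Section Recurrence.

Variables (F : fieldType) (ds T : int -> F).
Hypothesis T_neq0 : forall h, T h != 0.
Hypothesis T_rec : forall h, T (h - 1) * T (h + 1) = ds h * T h ^+ 2.

Lemma T_prod_step k h :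
  T (h - (k + 1)) * T (h + (k + 1)) * (T (h - (k - 1)) * T (h + (k - 1)))
  = ds (h - k) * ds (h + k) * (T (h - k) * T (h + k)) ^+ 2.
Proof.
have -> : h - (k + 1) = h - k - 1 by ring.
have -> : h + (k + 1) = h + k + 1 by ring.
have -> : h - (k - 1) = h - k + 1 by ring.
have -> : h + (k - 1) = h + k - 1 by ring.
transitivity (T (h - k - 1) * T (h - k + 1) * (T (h + k - 1) * T (h + k + 1))).
  by ring.
by rewrite !T_rec; ring.
Qed.

Lemma T_prod2 h :
  T (h - 2) * T (h + 2) = ds (h - 1) * ds h ^+ 2 * ds (h + 1) * T h ^+ 2.
Proof.
have := T_prod_step 1 h; rewrite subrr subr0 T_rec => step.
apply: (mulIf (mulf_neq0 (T_neq0 h) (T_neq0 h))).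
by rewrite step; ring.
Qed.

Lemma T_prod3 h :
  T (h - 3) * T (h + 3)
  = ds (h - 2) * ds (h - 1) ^+ 2 * ds h ^+ 3 * ds (h + 1) ^+ 2 * ds (h + 2) * T h ^+ 2.
Proof.
have := T_prod_step 2 h; rewrite T_rec T_prod2 => step.
have dT_neq0 : ds h * T h ^+ 2 != 0 by rewrite -T_rec mulf_neq0.
by apply: (mulIf dT_neq0); rewrite step; ring.
Qed.

End Recurrence.

Theorem mainTheorem1 (F : fieldType)
  (hchar2 : (2%N \notin [pchar F])) (hchar3 : (3%N \notin [pchar F]))
  (f g v w : F) (us vs ws ds es : int -> F)
  (hu : forall h : int, us h != 0)
  (hi : forall h : int, cf_line_i f g vs ws ds es h)
  (hii : forall h : int, cf_line_ii f g v w us vs ws ds es h)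
  (T : int -> F)
  (hT0 : forall h : int, T h != 0)
  (hT : forall h : int, T (h - 1) * T (h + 1) = ds h * T h ^+ 2) :
  forall h : int,
    T (h - 3) * T (h + 3)
    = v ^+ 2 * (T (h - 2) * T (h + 2)) - v ^+ 3 * (g + w * f + w ^+ 3) * T h ^+ 2.
Proof.
move=> h.
rewrite (T_prod3 hT0 hT) (T_prod2 hT0 hT) (ds_prod5 hu hi hii).
by rewrite horner_Apoly; ring.
Qed.
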